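(* Let $F$ be an infinite field and $n\ge2$. If $f,h\in\mathcal{B}_{(g_1,\dots,g_k)}$ satisfy $f\le_{\mathcal{B}_{(g_1,\dots,g_k)}}h$, then $h\in\langle\{f\}\cup I\rangle_{T_{\mathbb{Z}_n}}$.
   Context: $UT_n(F)^{(-)}$: $n\times n$ upper triangular matrices, bracket $[a,b]=ab-ba$, canonical $\mathbb{Z}_n$-grading (degree-$k$ component spanned by $e_{ij}$, $j-i=k$); $I$ is its $T_{\mathbb{Z}_n}$-ideal of graded identities in the free graded Lie algebra with variables $y_1,y_2,\dots$ of degree $0$ and countably many variables of each nonzero degree. Commutators are left normed. Fix distinct variables $z_1,\dots,z_k$ of degrees $g_1,\dots,g_k\in\{1,\dots,n-1\}$ with $\sum g_i\le n-1$. $\mathcal{B}_{(g_1,\dots,g_k)}$ is the set of commutators $[z_{\sigma(1)},a^{(1)}_1y_1,\dots,a^{(1)}_my_m,z_{\sigma(2)},a^{(2)}_1y_1,\dots,a^{(2)}_my_m,\dots,z_{\sigma(k)},a^{(k)}_1y_1,\dots,a^{(k)}_my_m]$ with $\sigma\in S_k$, $\sigma(1)=1$, $m\ge0$, $a^{(j)}_i\ge0$, where $a y$ means $y$ repeated $a$ times. For such $f$, $V_f=((a^{(1)}_1,\dots,a^{(k)}_1),\dots,(a^{(1)}_m,\dots,a^{(k)}_m))$, a finite sequence in $\mathbb{N}_0^k$. For finite sequences in $\mathbb{N}_0^k$, $(p_1,\dots,p_m)\le_k(q_1,\dots,q_r)$ iff there is a strictly increasing $\varphi:\{1,\dots,m\}\to\{1,\dots,r\}$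 with $p_i\le q_{\varphi(i)}$ componentwise. $f\le_{\mathcal{B}_{(g_1,\dots,g_k)}}h$ iff $f,h$ have the same permutation $\sigma$ and $V_f\le_kV_h$. *)

From HB Require Import structures.
From mathcomp Require Import all_boot all_order all_algebra all_fingroup.
Set Implicit Arguments. Unset Strict Implicit. Unset Printing Implicit Defensive.
Import Order.TTheory GRing.Theory Num.Theory.
Local Open Scope ring_scope.

(* Graded variables of the free Z_n-graded Lie algebra: a variable is a pair
   (degree in {0,..,n-1} ~ Z_n, index in nat); countably many of each degree.
   The degree-0 variables (0,i), i = 0,1,2,... are y_1, y_2, y_3, ... *)
Definition var (n : nat) := ('I_n * nat)%type.

Inductive lterm (F : Type) (n : nat) : Type :=
| LVar : var n -> lterm F n
| LZero : lterm F n
| LAdd : lterm F n -> lterm F n -> lterm F n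
| LScale : F -> lterm F n -> lterm F n
| LBr : lterm F n -> lterm F n -> lterm F n.

Arguments LZero {F n}.

(* Equality in the free Lie algebra over F: the congruence generated by
   the F-vector space axioms, bilinearity, alternation and Jacobi. *)
Inductive lie_eq (F : fieldType) (n : nat) : lterm F n -> lterm F n -> Prop :=
| le_refl t : lie_eq t t
| le_sym t u : lie_eq t u -> lie_eq u t
| le_trans t u w : lie_eq t u -> lie_eq u w -> lie_eq t w
| le_add t t' u u' : lie_eq t t' -> lie_eq u u' -> lie_eq (LAdd t u) (LAdd t' u')
| le_scale c t t' : lie_eq t t' -> lie_eq (LScale c t) (LScale c t')
| le_br t t' u u' : lie_eq t t' -> lie_eq u u' -> lie_eq (LBr t u) (LBr t' u')
| le_addA a b c : lie_eq (LAdd a (LAdd b c)) (LAdd (LAdd a b) c)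
| le_addC a b : lie_eq (LAdd a b) (LAdd b a)
| le_add0 a : lie_eq (LAdd LZero a) a
| le_addN a : lie_eq (LAdd a (LScale (-1) a)) LZero
| le_scaleA c d a : lie_eq (LScale c (LScale d a)) (LScale (c * d) a)
| le_scale1 a : lie_eq (LScale 1 a) a
| le_scaleDr c a b : lie_eq (LScale c (LAdd a b)) (LAdd (LScale c a) (LScale c b))
| le_scaleDl c d a : lie_eq (LScale (c + d) a) (LAdd (LScale c a) (LScale d a))
| le_brDl a b c : lie_eq (LBr (LAdd a b) c) (LAdd (LBr a c) (LBr b c))
| le_brDr a b c : lie_eq (LBr a (LAdd b c)) (LAdd (LBr a b) (LBr a c))
| le_brZl c a b : lie_eq (LBr (LScale c a) b) (LScale c (LBr a b))
| le_brZr c a b : lie_eq (LBr a (LScale c b)) (LScale c (LBr a b))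
| le_brAlt a : lie_eq (LBr a a) LZero
| le_jacobi a b c :
    lie_eq (LAdd (LBr (LBr a b) c) (LAdd (LBr (LBr b c) a) (LBr (LBr c a) b))) LZero.

(* Homogeneity of degree g (an element of Z_n represented by g < n). *)
Inductive lhom (F : Type) (n : nat) : nat -> lterm F n -> Prop :=
| lh_var v : lhom (val v.1) (LVar F v)
| lh_zero g : lhom g LZero
| lh_add g t u : lhom g t -> lhom g u -> lhom g (LAdd t u)
| lh_scale g c t : lhom g t -> lhom g (LScale c t)
| lh_br g1 g2 t u : lhom g1 t -> lhom g2 u -> lhom ((g1 + g2) %% n)%N (LBr t u).

(* Substitution of terms for variables (= endomorphism of the free Lie algebra). *)
Fixpoint lsubst (F : Type) (n : nat) (s : var n -> lterm F n) (t : lterm F n)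
  : lterm F n :=
  match t with
  | LVar v => s v
  | LZero => LZero
  | LAdd a b => LAdd (lsubst s a) (lsubst s b)
  | LScale c a => LScale c (lsubst s a)
  | LBr a b => LBr (lsubst s a) (lsubst s b)
  end.

Definition graded_subst (F : Type) (n : nat) (s : var n -> lterm F n) : Prop :=
  forall v : var n, lhom (val v.1) (s v).

Inductive tideal (F : fieldType) (n : nat) (S : lterm F n -> Prop)
  : lterm F n -> Prop :=
| ti_gen t : S t -> tideal S t
| ti_eq t u : lie_eq t u -> tideal S t -> tideal S u
| ti_zero : tideal S LZero
| ti_add t u : tideal S t -> tideal S u -> tideal S (LAdd t u)
| ti_scale c t : tideal S t -> tideal S (LScale c t)
| ti_brl t u : tideal S t -> tideal S (LBr t u)
| ti_brr t u : tideal S t -> tideal S (LBr u t)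
| ti_subst s t : graded_subst s -> tideal S t -> tideal S (lsubst s t).

Fixpoint leval (F : fieldType) (n : nat) (e : var n -> 'M[F]_n) (t : lterm F n)
  : 'M[F]_n :=
  match t with
  | LVar v => e v
  | LZero => 0
  | LAdd a b => leval e a + leval e b
  | LScale c a => c *: leval e a
  | LBr a b => leval e a *m leval e b - leval e b *m leval e a
  end.

(* Degree-k component of UT_n(F) for the canonical Z_n-grading:
   span of e_ij with j - i = k. *)
Definition ut_comp (F : fieldType) (n k : nat) (A : 'M[F]_n) : Prop :=
  forall i j : 'I_n, A i j != 0 -> val j = (val i + k)%N.

Definition UT_identity (F : fieldType) (n : nat) (t : lterm F n) : Prop :=
  forall e : var n -> 'M[F]_n,
    (forall v : var n, ut_comp (val v.1) (e v)) -> leval e t = 0.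

Definition infinite_field (F : fieldType) : Prop :=
  forall s : seq F, exists x : F, x \notin s.

(* y_{i+1} := the degree-0 variable (0, i). *)
Definition yvar (n : nat) (hn : (0 < n)%N) (i : nat) : var n := (Ordinal hn, i).

(* The left-normed commutator
   [z_{s(1)}, a^(1)_1 y_1, ..., a^(1)_m y_m, ..., z_{s(k)}, a^(k)_1 y_1, ..., a^(k)_m y_m]
   where V = (V_1, ..., V_m), V_i = (a^(1)_i, ..., a^(k)_i) (block j <-> V_i j). *)
Definition Bcomm (F : Type) (n k : nat) (hn : (0 < n)%N) (hk : (0 < k)%N)
  (z : 'I_k -> var n) (s : 'S_k) (V : seq ('I_k -> nat)) : lterm F n :=
  let ys (j : 'I_k) : seq (lterm F n) :=
    flatten [seq nseq (nth (fun _ => 0%N) V i j) (LVar F (yvar hn i))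
            | i <- iota 0 (size V)] in
  let tl := flatten [seq (if val j == 0%N then [::] else [:: LVar F (z (s j))]) ++ ys j
                    | j <- enum 'I_k] in
  foldl (@LBr F n) (LVar F (z (s (Ordinal hk)))) tl.

Definition leq_k (k : nat) (p q : seq ('I_k -> nat)) : Prop :=
  exists phi : nat -> nat,
    (forall i j, (i < j < size p)%N -> (phi i < phi j)%N) /\
    (forall i, (i < size p)%N ->
       (phi i < size q)%N /\
       forall c : 'I_k, (nth (fun _ => 0%N) p i c <= nth (fun _ => 0%N) q (phi i) c)%N).

From Pilot Require Import Defs.
From mathcomp Require Import all_boot all_order all_algebra all_fingroup.
From mathcomp Require Import zify.
Set Implicit Arguments. Unset Strict Implicit. Unset Printing Implicit Defensive.
Import GRing.Theory.

(* Two terms that agree under every graded evaluation in UT_n differ by a graded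
   identity, so it suffices to transform f into h by steps that are either
   T-ideal operations or invisible to such evaluations.  Group the degree-0
   variables of a commutator in B into the blocks following each z.  They
   evaluate to diagonal, hence commuting, matrices, so the order inside a block
   is irrelevant.  The injection phi witnessing V_f <=_k V_h is realised by a
   graded substitution renaming the y's, and missing y's are inserted block by
   block: appending y to the last block is bracketing with y, and appending it
   to block j is, by the Jacobi identity, the difference of appending it to
   block j+1 and substituting [z_(j+1), y] for z_(j+1). *)

Lemma eq_in_foldl (A : Type) (B : eqType) (f g : A -> B -> A) (a : A) (s : seq B) :
  {in s, forall x a, f a x = g a x} -> foldl f a s = foldl g a s.
Proof.
elim: s a => //= x s IHs a fg; rewrite fg ?mem_head // IHs // => y sy.
by apply: fg; rewrite in_cons sy orbT.
Qed.

Lemma foldl_flatten (A B C : Type) (f : A -> B -> A) (g : C -> seq B) (a : A) (s : seq C) :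
  foldl f a (flatten [seq g x | x <- s]) = foldl (fun a x => foldl f a (g x)) a s.
Proof. by elim: s a => //= x s IHs a; rewrite foldl_cat IHs. Qed.

Lemma perm_cat_of_leq_count (T : eqType) (s1 s2 : seq T) :
  (forall x, count_mem x s1 <= count_mem x s2) -> exists s, perm_eq s2 (s1 ++ s).
Proof.
case/count_subseqP => s /perm_to_subseq[s3 s2s3] s1s.
by exists s3; rewrite (perm_trans s2s3) // perm_cat2r perm_sym.
Qed.

Definition block_rcons (T : Type) (B : nat -> seq T) (j : nat) (x : T) (i : nat) :=
  if i == j then rcons (B i) x else B i.

Section MatrixBracket.
Local Open Scope ring_scope.

Lemma subrACA (V : zmodType) (a b c d : V) : (a - b) - (c - d) = (a - c) - (b - d).
Proof. by rewrite !opprD !opprK addrACA. Qed.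

Variables (F : fieldType) (n : nat).
Implicit Types A B C M X Y : 'M[F]_n.

Definition mxbr A B := A *m B - B *m A.

Lemma mxbrBl A B C : mxbr (A - B) C = mxbr A C - mxbr B C.
Proof. by rewrite /mxbr mulmxBl mulmxBr subrACA. Qed.

Lemma mxbr_jacobi M X Y : mxbr M (mxbr X Y) = mxbr (mxbr M X) Y - mxbr (mxbr M Y) X.
Proof.
rewrite /mxbr !mulmxBl !mulmxBr !mulmxA [RHS]subrACA (subrACA (M *m X *m Y) (X *m M *m Y)).
rewrite (subrACA (Y *m M *m X) (Y *m X *m M)) -[Y *m M *m X - _]opprB (opprB (X *m Y *m M)).
by rewrite (opprD (- _)) !opprK subrKA.
Qed.

Lemma mxbr_commute M X Y : X *m Y = Y *m X -> mxbr (mxbr M Y) X = mxbr (mxbr M X) Y.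
Proof.
move=> cXY; rewrite /mxbr !mulmxBl !mulmxBr -!mulmxA cXY !mulmxA cXY.
by rewrite subrACA.
Qed.

Lemma ut_comp0_diag A : ut_comp 0 A -> A = diag_mx (\row_i A i i).
Proof.
move=> A0; apply/matrixP => i j; rewrite !mxE.
have [<-|neij] := eqVneq i j; first by rewrite mulr1n.
by apply/eqP; apply: contraR neij => /A0; rewrite addn0 => /val_inj ->.
Qed.

Lemma ut_comp0_comm A B : ut_comp 0 A -> ut_comp 0 B -> A *m B = B *m A.
Proof. by move=> /ut_comp0_diag -> /ut_comp0_diag ->; apply: diag_mxC. Qed.

End MatrixBracket.

Section BlockCommutator.
Local Open Scope ring_scope.
Variables (F : fieldType) (n : nat).
Local Notation mxbr := (@mxbr F n).
Implicit Types (M X : 'M[F]_n) (s : seq 'M[F]_n) (E : nat -> 'M[F]_n)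
  (B : nat -> seq 'M[F]_n).

Definition commuting s := {in s &, forall X Y, X *m Y = Y *m X}.

Lemma commuting_behead X s : commuting (X :: s) -> commuting s.
Proof. by move=> cXs Y Z sY sZ; apply: cXs; rewrite in_cons ?sY ?sZ orbT. Qed.

Lemma foldl_mxbrB M M' s : foldl mxbr (M - M') s = foldl mxbr M s - foldl mxbr M' s.
Proof. by elim: s M M' => //= X s IHs M M'; rewrite mxbrBl IHs. Qed.

Lemma foldl_mxbr_rem M X s : commuting s -> X \in s ->
  foldl mxbr M s = foldl mxbr (mxbr M X) (rem X s).
Proof.
elim: s M => //= Y s IHs M cYs; rewrite in_cons.
have [->|neYX] /= := eqVneq Y X; first by [].
move=> sX; rewrite (IHs _ (commuting_behead cYs) sX) mxbr_commute //.
by rewrite cYs ?mem_head // in_cons sX orbT.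
Qed.

Lemma perm_foldl_mxbr M s s' : commuting s -> perm_eq s s' ->
  foldl mxbr M s = foldl mxbr M s'.
Proof.
elim: s M s' => [|X s IHs] M s' cs ss'.
  by move: ss'; rewrite perm_sym => /perm_nilP ->.
have s'X : X \in s' by rewrite -(perm_mem ss') mem_head.
have cs' : commuting s' by move=> Y Z; rewrite -!(perm_mem ss'); apply: cs.
rewrite (foldl_mxbr_rem M cs' s'X) /= (IHs _ (rem X s') (commuting_behead cs)) //.
by rewrite -(perm_cons X) (perm_trans ss') // perm_to_rem.
Qed.

Definition bcomm_step E B i M :=
  foldl mxbr (if i == 0%N then M else mxbr M (E i)) (B i).

Definition mx_bcomm E B k := foldl (fun M i => bcomm_step E B i M) (E 0%N) (iota 0 k).

Lemma bcomm_stepB E B i M M' :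
  bcomm_step E B i (M - M') = bcomm_step E B i M - bcomm_step E B i M'.
Proof. by rewrite /bcomm_step; case: eqP => _; rewrite ?mxbrBl foldl_mxbrB. Qed.

Lemma foldl_bcomm_stepB E B l M M' :
  foldl (fun M i => bcomm_step E B i M) (M - M') l =
  foldl (fun M i => bcomm_step E B i M) M l - foldl (fun M i => bcomm_step E B i M) M' l.
Proof. by elim: l M M' => //= i l IHl M M'; rewrite bcomm_stepB IHl. Qed.

Lemma eq_in_bcomm_steps E E' B B' M l : {in l, E =1 E'} -> {in l, B =1 B'} ->
  foldl (fun M i => bcomm_step E B i M) M l = foldl (fun M i => bcomm_step E' B' i M) M l.
Proof. by move=> eE eB; apply: eq_in_foldl => i li M'; rewrite /bcomm_step eE ?eB. Qed.

Lemma eq_mx_bcomm E E' B B' k : (0 < k)%N ->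
  (forall i, (i < k)%N -> E i = E' i) -> (forall i, (i < k)%N -> B i = B' i) ->
  mx_bcomm E B k = mx_bcomm E' B' k.
Proof.
move=> k_gt0 eE eB; rewrite /mx_bcomm eE //.
by apply: eq_in_bcomm_steps => i; rewrite mem_iota => /andP[_ ik]; [apply: eE | apply: eB].
Qed.

Lemma perm_mx_bcomm E B B' k :
  (forall i, (i < k)%N -> commuting (B i)) -> (forall i, (i < k)%N -> perm_eq (B i) (B' i)) ->
  mx_bcomm E B k = mx_bcomm E B' k.
Proof.
move=> cB pB; apply: eq_in_foldl => i; rewrite mem_iota => /andP[_ ik] M.
exact: perm_foldl_mxbr (cB i ik) (pB i ik).
Qed.

Lemma mx_bcomm_rcons_last E B k X : (0 < k)%N ->
  mx_bcomm E (block_rcons B k.-1 X) k = mxbr (mx_bcomm E B k) X.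
Proof.
case: k => // k _; rewrite succnK /mx_bcomm -addn1 iotaD !foldl_cat /= add0n.
rewrite (@eq_in_bcomm_steps _ E _ B) // => [|i]; last first.
  by rewrite mem_iota add0n /block_rcons => /andP[_ /ltn_eqF ->].
by rewrite /bcomm_step /block_rcons eqxx foldl_rcons.
Qed.

Lemma mx_bcomm_subst_br E B k j X : (j.+1 < k)%N -> commuting (X :: B j.+1) ->
  mx_bcomm (fun i => if i == j.+1 then mxbr (E i) X else E i) B k =
  mx_bcomm E (block_rcons B j.+1 X) k - mx_bcomm E (block_rcons B j X) k.
Proof.
move=> ltjk cXB; rewrite /mx_bcomm (_ : k = j + (2 + (k - j.+2)))%N; last by lia.
rewrite !iotaD !foldl_cat !add0n /=.
rewrite !(@eq_in_bcomm_steps _ E _ B _ (iota 0 j)) //; try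
  by move=> i; rewrite mem_iota => /andP[? ?]; rewrite /block_rcons /= ifN_eq //; apply/eqP; lia.
rewrite !(@eq_in_bcomm_steps _ E _ B _ (iota (j + 2) _)) //; try
  by move=> i; rewrite mem_iota => /andP[? ?]; rewrite /block_rcons /= ifN_eq //; apply/eqP; lia.
rewrite -foldl_bcomm_stepB; congr foldl.
have [neq1 neq2] : (j == j.+1) = false /\ (j.+1 == j) = false by split; apply/eqP; lia.
set P := foldl _ _ (iota 0 j); rewrite /bcomm_step /block_rcons !eqxx neq1 neq2 /=.
set Q := foldl mxbr _ (B j).
rewrite mxbr_jacobi foldl_mxbrB; congr (_ - _); last by rewrite foldl_rcons.
rewrite -[LHS]/(foldl mxbr (mxbr Q (E j.+1)) (X :: B j.+1)).
by apply: perm_foldl_mxbr cXB _; rewrite perm_sym perm_rcons.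
Qed.

End BlockCommutator.

Section TermEvaluation.
Variables (F : fieldType) (n : nat).
Local Open Scope ring_scope.
Implicit Types (t u w : lterm F n) (e : var n -> 'M[F]_n).

Lemma leval_foldl_LBr e t s :
  leval e (foldl (@LBr F n) t s) = foldl (@mxbr F n) (leval e t) (map (leval e) s).
Proof. by elim: s t => //= u s IHs t; rewrite IHs. Qed.

Lemma leval_lsubst e (sg : var n -> lterm F n) t :
  leval e (lsubst sg t) = leval (fun v => leval e (sg v)) t.
Proof. by elim: t => //= [t -> u ->|c t ->|t -> u ->]. Qed.

Definition graded_env e := forall v : var n, ut_comp (val v.1) (e v).

Variable S : lterm F n -> Prop.
Hypothesis S_UT : forall t, UT_identity t -> S t.

(* [t] is [u] plus the graded identity [t - u]. *)
Lemma tideal_eval_eq t u : tideal S u ->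
  (forall e, graded_env e -> leval e t = leval e u) -> tideal S t.
Proof.
move=> Su tu.
have Sut : tideal S (LAdd u (LAdd t (LScale (-1) u))).
  apply: ti_add => //; apply/ti_gen/S_UT => e ge /=.
  by rewrite tu // scaleN1r subrr.
apply: ti_eq Sut.
apply: Defs.le_trans (le_addA _ _ _) _.
apply: Defs.le_trans (le_add (le_addC _ _) (Defs.le_refl _)) _.
apply: Defs.le_trans (le_sym (le_addA _ _ _)) _.
apply: Defs.le_trans (le_add (Defs.le_refl _) (le_addN _)) _.
exact: Defs.le_trans (le_addC _ _) (le_add0 _).
Qed.

Lemma tideal_eval_sub t u w : tideal S u -> tideal S w ->
  (forall e, graded_env e -> leval e t = leval e u - leval e w) -> tideal S t.
Proof.
move=> Su Sw tuw; apply: (@tideal_eval_eq t (LAdd u (LScale (-1) w))).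
  by apply: ti_add => //; apply: ti_scale.
by move=> e ge /=; rewrite tuw // scaleN1r.
Qed.

End TermEvaluation.

Section BlockTerm.
Variables (F : fieldType) (n : nat) (n_gt0 : 0 < n) (Z : nat -> var n).
Implicit Types (e : var n -> 'M[F]_n) (L : nat -> seq nat).

Definition yterm i := LVar F (yvar n_gt0 i).

Definition bterm L k := foldl (@LBr F n) (LVar F (Z 0))
  (flatten [seq (if i == 0 then [::] else [:: LVar F (Z i)]) ++ map yterm (L i)
           | i <- iota 0 k]).

Lemma leval_bterm e L k : leval e (bterm L k) =
  mx_bcomm (fun i => e (Z i)) (fun i => map (fun a => e (yvar n_gt0 a)) (L i)) k.
Proof.
rewrite /bterm leval_foldl_LBr map_flatten -map_comp foldl_flatten.
apply: eq_in_foldl => i _ M /=; rewrite map_cat foldl_cat -map_comp.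
by rewrite /bcomm_step; case: (i == 0).
Qed.

Lemma commuting_yvals e s : graded_env e ->
  commuting [seq e (yvar n_gt0 a) | a <- s].
Proof. by move=> ge _ _ /mapP[a _ ->] /mapP[b _ ->]; apply: ut_comp0_comm; apply: ge. Qed.

Variables (k : nat) (k_gt0 : 0 < k) (S : lterm F n -> Prop).
Hypothesis S_UT : forall t, UT_identity t -> S t.
Hypothesis Z_deg : forall i, 0 < val (Z i).1.
Hypothesis Z_inj : forall i j, i < k -> j < k -> Z i = Z j -> i = j.

Lemma leval_bterm_rcons e L j v : leval e (bterm (block_rcons L j v) k) =
  mx_bcomm (fun i => e (Z i))
    (block_rcons (fun i => map (fun a => e (yvar n_gt0 a)) (L i)) j (e (yvar n_gt0 v))) k.
Proof.
rewrite leval_bterm; apply: eq_mx_bcomm => // i _.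
by rewrite /block_rcons; case: eqP => _; rewrite ?map_rcons.
Qed.

Lemma tideal_bterm_perm L L' : tideal S (bterm L k) ->
  (forall i, i < k -> perm_eq (L i) (L' i)) -> tideal S (bterm L' k).
Proof.
move=> SL LL'; apply: (tideal_eval_eq S_UT SL) => e ge; rewrite !leval_bterm.
symmetry; apply: perm_mx_bcomm => i ik; first exact: commuting_yvals.
exact: perm_map (LL' i ik).
Qed.

Lemma tideal_bterm_rename L (phi : nat -> nat) : tideal S (bterm L k) ->
  tideal S (bterm (fun i => map phi (L i)) k).
Proof.
move=> SL.
pose sg (w : var n) := if val w.1 == 0 then LVar F (w.1, phi w.2) else LVar F w.
have sg_graded : graded_subst sg.
  by move=> w; rewrite /sg; case: eqP => _; [apply: (lh_var F (w.1, phi w.2)) | apply: lh_var].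
apply: (tideal_eval_eq S_UT (ti_subst sg_graded SL)) => e ge.
rewrite leval_lsubst !leval_bterm; apply: eq_mx_bcomm => // i _.
  by rewrite /sg /= (negbTE (lt0n_neq0 (Z_deg i))).
by rewrite -map_comp.
Qed.

Lemma tideal_bterm_rcons_last L v : tideal S (bterm L k) ->
  tideal S (bterm (block_rcons L k.-1 v) k).
Proof.
move=> SL; apply: (tideal_eval_eq S_UT (ti_brl (yterm v) SL)) => e ge.
by rewrite leval_bterm_rcons mx_bcomm_rcons_last //= leval_bterm.
Qed.

Lemma tideal_bterm_rcons_pred L j v : j.+1 < k -> tideal S (bterm L k) ->
  tideal S (bterm (block_rcons L j.+1 v) k) -> tideal S (bterm (block_rcons L j v) k).
Proof.
move=> j1k SL SLj1.
pose sg (w : var n) := if w == Z j.+1 then LBr (LVar F w) (yterm v) else LVar F w.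
have sg_graded : graded_subst sg.
  move=> w; rewrite /sg; case: eqP => _; last exact: lh_var.
  have := lh_br (lh_var F w) (lh_var F (yvar n_gt0 v)).
  by rewrite /= addn0 modn_small.
apply: (tideal_eval_sub S_UT SLj1 (ti_subst sg_graded SL)) => e ge.
have -> : leval e (lsubst sg (bterm L k)) =
    mx_bcomm (fun i => if i == j.+1 then mxbr (e (Z i)) (e (yvar n_gt0 v)) else e (Z i))
      (fun i => map (fun a => e (yvar n_gt0 a)) (L i)) k.
  rewrite leval_lsubst leval_bterm; apply: eq_mx_bcomm => // i ik.
    rewrite /sg; have [->|neij] := eqVneq i j.+1; first by rewrite eqxx.
    by rewrite ifN_eq //; apply: contra_neq neij; apply: Z_inj.
  apply: eq_map => a; rewrite /sg; case: eqP => // yZ.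
  by have := Z_deg j.+1; rewrite -yZ.
rewrite mx_bcomm_subst_br //; last exact: (commuting_yvals (s := v :: L j.+1) ge).
by rewrite !leval_bterm_rcons opprB addrC subrK.
Qed.

Lemma tideal_bterm_rcons L j v : j < k -> tideal S (bterm L k) ->
  tideal S (bterm (block_rcons L j v) k).
Proof.
move=> jk SL; have [m jm] : exists m, j + m = k.-1 by exists (k.-1 - j); lia.
elim: m j jk jm => [|m IHm] j jk jm.
  by rewrite addn0 in jm; rewrite jm; apply: tideal_bterm_rcons_last.
apply: tideal_bterm_rcons_pred SL (IHm j.+1 _ _); lia.
Qed.

Lemma tideal_bterm_cat L j s : j < k -> tideal S (bterm L k) ->
  tideal S (bterm (fun i => if i == j then L i ++ s else L i) k).
Proof.
elim: s L => [|v s IHs] L jk SL.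
  by apply: tideal_bterm_perm SL _ => i _; case: eqP; rewrite ?cats0.
apply: tideal_bterm_perm (IHs _ jk (tideal_bterm_rcons v jk SL)) _ => i _.
by rewrite /block_rcons; case: eqP => // _; rewrite cat_rcons.
Qed.

Lemma tideal_bterm_leq_count L L' : tideal S (bterm L k) ->
  (forall i, i < k -> forall x, count_mem x (L i) <= count_mem x (L' i)) ->
  tideal S (bterm L' k).
Proof.
move=> SL LL'.
suff SLm m : m <= k -> tideal S (bterm (fun i => if i < m then L' i else L i) k).
  by apply: tideal_bterm_perm (SLm k (leqnn k)) _ => i ->.
elim: m => [|m IHm] mk; first by apply: tideal_bterm_perm SL _ => i _.
have [s Lm] := perm_cat_of_leq_count (LL' m mk).
apply: tideal_bterm_perm (tideal_bterm_cat s mk (IHm (ltnW mk))) _ => i _.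
by rewrite ltnS; case: ltngtP => // ->; rewrite perm_sym.
Qed.

End BlockTerm.

Section BlockSequence.
Variable k : nat.
Implicit Types V : seq ('I_k -> nat).

Definition block_seq V (c : 'I_k) :=
  flatten [seq nseq (nth (fun=> 0) V l c) l | l <- iota 0 (size V)].

Lemma count_map_block_seq (phi : nat -> nat) V c x :
  count_mem x (map phi (block_seq V c)) =
  \sum_(0 <= l < size V | phi l == x) nth (fun=> 0) V l c.
Proof.
rewrite /index_iota subn0 big_mkcond.
rewrite /block_seq map_flatten count_flatten -!map_comp sumnE big_map.
apply: eq_bigr => l _; rewrite /= count_map count_nseq /=.
by case: (phi l == x); rewrite ?mul1n ?mul0n.
Qed.

Lemma leq_count_block_seq Vf Vh (phi : nat -> nat) c x :
  (forall i j, i < j < size Vf -> phi i < phi j) ->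
  (forall i, i < size Vf -> phi i < size Vh /\
     forall c, nth (fun=> 0) Vf i c <= nth (fun=> 0) Vh (phi i) c) ->
  count_mem x (map phi (block_seq Vf c)) <= count_mem x (block_seq Vh c).
Proof.
move=> phi_mono phi_le; rewrite -(map_id (block_seq Vh c)) !count_map_block_seq !big_mkord.
have [l0 /eqP phil0|none] := pickP (fun l : 'I_(size Vf) => phi l == x); last first.
  by rewrite big1 // => l; rewrite none.
rewrite (bigD1 l0) ?phil0 //= big1 ?addn0 => [|l /andP[/eqP phil nel0]]; last first.
  have := phi_mono l l0; have := phi_mono l0 l; have := ltn_ord l; have := ltn_ord l0.
  by move: nel0; rewrite -val_eqE /=; lia.
have [lt_phi le_phi] := phi_le l0 (ltn_ord l0); rewrite phil0 in lt_phi.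
rewrite (bigD1 (Ordinal lt_phi)) //=; apply: leq_trans (le_phi c) _.
by rewrite phil0 leq_addr.
Qed.

End BlockSequence.

Lemma Bcomm_bterm (F : fieldType) (n k : nat) (n_gt0 : 0 < n) (k_gt0 : 0 < k)
    (z : 'I_k -> var n) (s : 'S_k) (V : seq ('I_k -> nat)) :
  let o := Ordinal k_gt0 in
  Bcomm F n_gt0 k_gt0 z s V =
  bterm F n_gt0 (fun i => z (s (insubd o i))) (fun i => block_seq V (insubd o i)) k.
Proof.
move=> o; rewrite /Bcomm /bterm.
have -> : insubd o 0 = o by apply: val_inj; rewrite val_insubd k_gt0.
congr foldl; rewrite -[iota 0 k]val_enum_ord -[in RHS]map_comp; congr flatten.
apply: eq_map => j /=; rewrite valKd; congr (_ ++ _).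
rewrite /block_seq map_flatten -map_comp; congr flatten; apply: eq_map => l /=.
by rewrite map_nseq.
Qed.

Theorem mainTheorem13 (F : fieldType) (hF : infinite_field F)
  (n : nat) (hn : (1 < n)%N)
  (k : nat) (hk : (0 < k)%N)
  (z : 'I_k -> var n) (hz_inj : injective z)
  (hz_deg : forall j : 'I_k, (0 < val (z j).1)%N)
  (hz_sum : (\sum_(j < k) val (z j).1 <= n - 1)%N)
  (s : 'S_k) (hs : s (Ordinal hk) = Ordinal hk)
  (Vf Vh : seq ('I_k -> nat)) (hle : leq_k Vf Vh) :
  tideal (fun t => t = Bcomm F (ltnW hn) hk z s Vf \/ UT_identity t)
         (Bcomm F (ltnW hn) hk z s Vh).
Proof.
set S := fun t => _ \/ _; rewrite !Bcomm_bterm in S *.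
set o := Ordinal hk; set Z := fun i => z (s (insubd o i)).
have S_UT t : UT_identity t -> S t by right.
have Z_deg i : 0 < val (Z i).1 by apply: hz_deg.
have Z_inj i j : i < k -> j < k -> Z i = Z j -> i = j.
  by move=> ik jk /hz_inj/perm_inj/(congr1 val); rewrite !val_insubd ik jk.
have SVf : tideal S (bterm F (ltnW hn) Z (fun i => block_seq Vf (insubd o i)) k).
  by apply: ti_gen; left.
have [phi [phi_mono phi_le]] := hle.
apply: (tideal_bterm_leq_count hk S_UT Z_deg Z_inj (tideal_bterm_rename hk S_UT Z_deg phi SVf)).
by move=> i _ x; apply: leq_count_block_seq.
Qed.
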